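(* Let $2<\alpha<4$ and $c\ge1$. For $N_1>0$ set $N_2=cN_1$, and let $(\Lambda_1^*,\Lambda_2^* )$ be the Nash equilibrium of the two-player Variable-Rate Random Access Game in which player $i\in\{1,2\}$ chooses $\Lambda_i\in[0,N_i]$ and receives payoff \[ U_i(\Lambda_1,\Lambda_2)=\Lambda_i\int_0^\infty e^{-(\Lambda_1+\Lambda_2)x^{2/\alpha}}\frac{dx}{1+x}. \] Then, in the limit $N_1\to\infty$, the equilibrium is \[ (\Lambda_1^*,\Lambda_2^* )=\begin{cases}(N_1,N_2), & N_1\le N_2\le \frac{2}{\alpha-2}N_1,\\[2pt] \left(N_1,\frac{2}{\alpha-2}N_1\right), & \frac{2}{\alpha-2}N_1\le N_2,\end{cases} \] in the sense that $\Lambda_1^*=N_1$ and $\Lambda_2^*/N_1\to\min\!\left(c,\frac{2}{\alpha-2}\right)$ as $N_1\to\infty$.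
   Context: A Nash equilibrium is a pair $(\Lambda_1^*,\Lambda_2^* )\in[0,N_1]\times[0,N_2]$ such that $\Lambda_1^*$ maximizes $U_1(\cdot,\Lambda_2^* )$ over $[0,N_1]$ and $\Lambda_2^*$ maximizes $U_2(\Lambda_1^*,\cdot)$ over $[0,N_2]$. *)

From Stdlib Require Import Reals.
From Coquelicot Require Import Coquelicot.
Open Scope R_scope.

(* Real power x^y for x >= 0 with the convention 0^y = 0 (y > 0 here). *)
Definition rpow (x y : R) : R := if Rle_dec x 0 then 0 else Rpower x y.

Definition Iint (alpha s : R) : R :=
  RInt_gen (fun x => exp (- s * rpow x (2 / alpha)) / (1 + x))
    (at_point 0) (Rbar_locally p_infty).

Definition U1 (alpha L1 L2 : R) : R := L1 * Iint alpha (L1 + L2).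
Definition U2 (alpha L1 L2 : R) : R := L2 * Iint alpha (L1 + L2).

Definition is_Nash (alpha N1 N2 L1s L2s : R) : Prop :=
  (0 <= L1s <= N1 /\ 0 <= L2s <= N2) /\
  (forall L1, 0 <= L1 <= N1 -> U1 alpha L1 L2s <= U1 alpha L1s L2s) /\
  (forall L2, 0 <= L2 <= N2 -> U2 alpha L1s L2 <= U2 alpha L1s L2s).

From Stdlib Require Import Reals Lra Classical.
From Coquelicot Require Import Coquelicot.
Open Scope R_scope.

(* Substituting [x = lam * y] in [Iint] shows that [phi s = s ^ (alpha/2) * Iint alpha s] is
   nondecreasing and bounded, hence increases to a positive supremum [G].  Against an opponent
   rate [a], the payoff [L * Iint alpha (a + L)] equals [L (a + L) ^ (-alpha/2) * phi (a + L)]: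
   the first factor is unimodal with peak at [L = 2 a / (alpha - 2)] and the second is
   nondecreasing, so every best response is at least [min (N_i, 2 a / (alpha - 2))].  As
   [2 / (alpha - 2) > 1] and [N2 >= N1], player 1 plays [N1].  For large [N1], [phi] is close to
   [G] on the relevant range, so player 2's payoff at [L = w N1] is essentially a constant times
   [w (1 + w) ^ (-alpha/2)], which pins [Lambda_2 / N1] to [min (c, 2 / (alpha - 2))]. *)

Lemma Rpower_pos x y : 0 < Rpower x y.
Proof. apply exp_pos. Qed.

Lemma exp_le_exp x y : x <= y -> exp x <= exp y.
Proof. intros [H | ->]; [left; now apply exp_increasing | lra]. Qed.

Lemma is_lub_approx (E : R -> Prop) l y : is_lub E l -> y < l -> exists x, E x /\ y < x.
Proof.
  intros [_ Hlub] Hy. apply NNPP; intros Hno.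
  enough (l <= y) by lra.
  apply Hlub. intros x Ex. apply Rnot_lt_le. intros Hlt. apply Hno. now exists x.
Qed.

Lemma rpow_ge0 x y : 0 <= rpow x y.
Proof. unfold rpow. destruct (Rle_dec x 0); [lra | left; apply Rpower_pos]. Qed.

Lemma rpow_Rpower x y : 0 < x -> rpow x y = Rpower x y.
Proof. intros. unfold rpow. destruct (Rle_dec x 0); [lra | easy]. Qed.

Lemma rpow0 y : rpow 0 y = 0.
Proof. unfold rpow. destruct (Rle_dec 0 0); [easy | lra]. Qed.

Lemma rpow_Rmult_l lam x y : 0 < lam -> 0 <= x -> rpow (lam * x) y = Rpower lam y * rpow x y.
Proof.
  intros Hl [Hx | <-].
  - rewrite !rpow_Rpower by nra. now rewrite Rpower_mult_distr.
  - now rewrite Rmult_0_r, rpow0, Rmult_0_r.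
Qed.

Lemma rpow_continuity_pt x y : 0 < y -> 0 <= x -> continuity_pt (fun t => rpow t y) x.
Proof.
  intros Hy [Hx | <-].
  - apply (continuity_pt_locally_ext (fun t => Rpower t y) _ x x); auto.
    + intros t Ht. apply Rabs_def2 in Ht. rewrite rpow_Rpower; [easy | lra].
    + apply derivable_continuous_pt. exists (y * Rpower x (y - 1)).
      now apply derivable_pt_lim_power.
  - apply continuity_pt_locally. intros eps.
    exists (mkposreal _ (Rpower_pos eps (/ y))). intros t Ht.
    change (Rabs (t - 0) < Rpower eps (/ y)) in Ht.
    rewrite rpow0, Rminus_0_r, Rabs_pos_eq by apply rpow_ge0.
    unfold rpow. destruct (Rle_dec t 0); [apply cond_pos |].
    rewrite Rminus_0_r, Rabs_pos_eq in Ht by lra.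
    replace (pos eps) with (Rpower (Rpower eps (/ y)) y).
    + apply Rlt_Rpower_l; lra.
    + rewrite Rpower_mult, Rinv_l, Rpower_1 by (try apply cond_pos; lra). easy.
Qed.

Definition integrand (alpha s x : R) : R := exp (- s * rpow x (2 / alpha)) / (1 + x).

Lemma integrand_ge0 alpha s x : 0 <= x -> 0 <= integrand alpha s x.
Proof. intros. apply Rdiv_le_0_compat; [left; apply exp_pos | lra]. Qed.

Lemma integrand_continuity_pt alpha s x : 0 < alpha -> 0 <= x -> continuity_pt (integrand alpha s) x.
Proof.
  intros Ha Hx. apply continuity_pt_div; [| | lra].
  - apply (continuity_pt_comp (fun t => - s * rpow t (2 / alpha))).
    + apply continuity_pt_scal, rpow_continuity_pt; [apply Rdiv_lt_0_compat |]; lra.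
    + apply derivable_continuous_pt, derivable_pt_exp.
  - apply continuity_pt_plus; [apply continuity_pt_const; now intros ? ? | apply continuity_pt_id].
Qed.

Lemma integrand_comp_scal_continuity_pt alpha s lam x : 0 < alpha -> 0 < lam -> 0 <= x ->
  continuity_pt (fun y => integrand alpha s (lam * y)) x.
Proof.
  intros Ha Hl Hx. apply (continuity_pt_comp (fun y => lam * y)).
  - apply continuity_pt_scal, continuity_pt_id.
  - apply integrand_continuity_pt; nra.
Qed.

Lemma ex_RInt_continuity_ge0 (g : R -> R) b :
  0 <= b -> (forall x, 0 <= x -> continuity_pt g x) -> ex_RInt g 0 b.
Proof.
  intros Hb Hg. apply (ex_RInt_continuous (V := R_CompleteNormedModule)). intros z Hz.
  rewrite Rmin_left in Hz by lra. apply continuity_pt_filterlim, Hg. lra.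
Qed.

Lemma RInt_integrand_comp_scal alpha s lam b : 0 < alpha -> 0 < lam -> 0 <= b ->
  RInt (integrand alpha s) 0 b = lam * RInt (fun y => integrand alpha s (lam * y)) 0 (b / lam).
Proof.
  intros Ha Hl Hb.
  assert (Hlin := RInt_comp_lin (integrand alpha s) lam 0 0 (b / lam)).
  replace (lam * 0 + 0) with 0 in Hlin by ring.
  replace (lam * (b / lam) + 0) with b in Hlin by (field; lra).
  rewrite <- Hlin
    by (apply ex_RInt_continuity_ge0; [lra | intros; apply integrand_continuity_pt; lra]).
  rewrite <- (RInt_scal (V := R_CompleteNormedModule))
    by (apply ex_RInt_continuity_ge0; [apply Rdiv_le_0_compat | intros; apply integrand_comp_scal_continuity_pt]; lra).
  apply RInt_ext. intros x _. now rewrite Rplus_0_r.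
Qed.

Lemma integrand_comp_scal_le alpha s t lam y d : 0 < lam -> 0 <= y ->
  s * Rpower lam (2 / alpha) = t -> 0 < d <= 1 + lam * y ->
  integrand alpha s (lam * y) <= exp (- t * rpow y (2 / alpha)) / d.
Proof.
  intros Hl Hy Hst Hd. unfold integrand. rewrite rpow_Rmult_l, <- Hst by easy.
  replace (- s * (Rpower lam (2 / alpha) * rpow y (2 / alpha)))
    with (- (s * Rpower lam (2 / alpha)) * rpow y (2 / alpha)) by ring.
  apply Rmult_le_compat_l; [left; apply exp_pos | apply Rinv_le_contravar; lra].
Qed.

Lemma exp_neg_rpow_continuity_pt alpha x :
  0 < alpha -> 0 <= x -> continuity_pt (fun y => exp (- rpow y (2 / alpha))) x.
Proof.
  intros Ha Hx. apply (continuity_pt_comp (fun y => - rpow y (2 / alpha)) exp).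
  - apply continuity_pt_opp, rpow_continuity_pt; [apply Rdiv_lt_0_compat |]; lra.
  - apply derivable_continuous_pt, derivable_pt_exp.
Qed.

(* For [y >= 1], [y ^ (2 / alpha) >= sqrt y] and [exp (sqrt y) >= (sqrt y / 4) ^ 4]. *)
Lemma exp_neg_rpow_le alpha y : 0 < alpha <= 4 -> 0 <= y ->
  exp (- rpow y (2 / alpha)) <= 1024 / ((1 + y) * (1 + y)).
Proof.
  intros Ha Hy. destruct (Rle_lt_dec y 1) as [Hy1 | Hy1].
  - apply Rle_trans with 1.
    + rewrite <- exp_0. apply exp_le_exp. pose proof (rpow_ge0 y (2 / alpha)). lra.
    + apply Rle_div_r; nra.
  - set (q := sqrt y).
    assert (Hq : 1 < q) by (unfold q; rewrite <- sqrt_1; apply sqrt_lt_1; lra).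
    assert (Hqq : q * q = y) by (apply sqrt_sqrt; lra).
    assert (Hrq : q <= rpow y (2 / alpha)).
    { rewrite rpow_Rpower by lra. unfold q. rewrite <- Rpower_sqrt by lra.
      apply Rle_Rpower; [lra |]. apply Rle_trans with (2 / 4); [lra |].
      apply Rmult_le_compat_l; [lra | apply Rinv_le_contravar; lra]. }
    assert (Hq4 : q / 4 <= exp (q / 4)) by (pose proof (exp_ineq1_le (q / 4)); lra).
    assert (Hexp : y * y / 256 <= exp q).
    { replace (exp q) with (exp (q / 4) * exp (q / 4) * (exp (q / 4) * exp (q / 4)))
        by (rewrite <- !exp_plus; f_equal; field).
      rewrite <- Hqq.
      assert (q / 4 * (q / 4) <= exp (q / 4) * exp (q / 4)) by (apply Rmult_le_compat; lra).
      apply Rle_trans with (q / 4 * (q / 4) * (q / 4 * (q / 4))); [right; field |].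
      apply Rmult_le_compat; nra. }
    apply Rle_trans with (exp (- q)); [apply exp_le_exp; lra |].
    rewrite exp_Ropp. apply Rle_trans with (/ (y * y / 256)).
    + apply Rinv_le_contravar; [apply Rdiv_lt_0_compat |]; nra.
    + apply Rle_trans with (256 / (y * y)); [right; field; nra |].
      apply (Rmult_le_reg_r (y * y * ((1 + y) * (1 + y)))); [nra |].
      unfold Rdiv. field_simplify; nra.
Qed.

Lemma RInt_exp_neg_rpow_le alpha b : 0 < alpha <= 4 -> 0 <= b ->
  RInt (fun y => exp (- rpow y (2 / alpha))) 0 b <= 1024.
Proof.
  intros Ha Hb.
  assert (Hprim : is_RInt (fun y => 1024 / ((1 + y) * (1 + y))) 0 b (1024 - 1024 / (1 + b))).
  { replace (1024 - 1024 / (1 + b)) with (-1024 / (1 + b) - -1024 / (1 + 0)) by (field; lra).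
    apply (is_RInt_derive (fun y => -1024 / (1 + y))).
    - intros x Hx. rewrite Rmin_left, Rmax_right in Hx by lra.
      auto_derive; [lra | field; lra].
    - intros x Hx. rewrite Rmin_left, Rmax_right in Hx by lra.
      apply continuity_pt_filterlim, continuity_pt_div; [| | nra].
      + apply continuity_pt_const. now intros ? ?.
      + apply continuity_pt_mult; apply continuity_pt_plus;
          solve [apply continuity_pt_const; now intros ? ? | apply continuity_pt_id]. }
  apply Rle_trans with (1024 - 1024 / (1 + b)).
  - rewrite <- (is_RInt_unique _ _ _ _ Hprim). apply RInt_le; [easy | | eexists; exact Hprim |].
    + apply ex_RInt_continuity_ge0; [easy |].
      intros x Hx. apply exp_neg_rpow_continuity_pt; lra.
    + intros x Hx. apply exp_neg_rpow_le; lra.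
  - assert (0 < 1024 / (1 + b)) by (apply Rdiv_lt_0_compat; lra). lra.
Qed.

Lemma RInt_gen_is_lub (f : R -> R) M :
  (forall x, 0 <= x -> 0 <= f x) ->
  (forall b, 0 <= b -> ex_RInt f 0 b) ->
  (forall b, 0 <= b -> RInt f 0 b <= M) ->
  is_lub (fun v => exists b, 0 <= b /\ v = RInt f 0 b)
    (RInt_gen f (at_point 0) (Rbar_locally p_infty)).
Proof.
  intros Hpos Hex HM.
  set (E := fun v => exists b, 0 <= b /\ v = RInt f 0 b).
  destruct (completeness E) as [l Hl].
  { exists M. intros v [b [Hb ->]]. auto. }
  { exists (RInt f 0 0), 0. split; lra. }
  assert (Hmono : forall b b', 0 <= b <= b' -> RInt f 0 b <= RInt f 0 b').
  { intros b b' Hbb.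
    assert (Hb' : ex_RInt f b b') by (apply (ex_RInt_Chasles_2 f 0); [lra | apply Hex; lra]).
    rewrite <- (RInt_Chasles f 0 b b') by (try apply Hex; easy || lra).
    assert (0 <= RInt f b b') by (apply RInt_ge_0; [lra | easy | intros x Hx; apply Hpos; lra]).
    change (RInt f 0 b <= RInt f 0 b + RInt f b b'). lra. }
  enough (Hgen : is_RInt_gen f (at_point 0) (Rbar_locally p_infty) l)
    by now rewrite (is_RInt_gen_unique _ _ Hgen).
  intros P [eps Heps].
  destruct (is_lub_approx E l (l - eps) Hl) as [v [[b0 [Hb0 ->]] Hv]].
  { pose proof (cond_pos eps). lra. }
  apply (Filter_prod _ _ _ (fun x => x = 0) (fun y => b0 < y)); [easy | now exists b0 |].
  intros x y -> Hy. exists (RInt f 0 y). split.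
  - apply (RInt_correct (V := R_CompleteNormedModule)), Hex. lra.
  - apply Heps.
    assert (RInt f 0 y <= l) by (apply Hl; exists y; split; [lra | easy]).
    assert (RInt f 0 b0 <= RInt f 0 y) by (apply Hmono; lra).
    change (Rabs (RInt f 0 y - l) < eps). apply Rabs_def1; lra.
Qed.

Section Iint.

Variable alpha : R.
Hypothesis alpha_range : 0 < alpha <= 4.

Lemma RInt_integrand_le s b : 0 < s -> 0 <= b ->
  RInt (integrand alpha s) 0 b <= Rpower s (- (alpha / 2)) * 1024.
Proof.
  intros Hs Hb. set (k := Rpower s (- (alpha / 2))).
  assert (Hk : 0 < k) by apply Rpower_pos.
  assert (Hbk : 0 <= b / k) by (apply Rdiv_le_0_compat; lra).
  rewrite (RInt_integrand_comp_scal alpha s k b) by lra.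
  apply Rmult_le_compat_l; [lra |].
  apply Rle_trans with (RInt (fun y => exp (- rpow y (2 / alpha))) 0 (b / k));
    [| now apply RInt_exp_neg_rpow_le].
  apply RInt_le; [easy | | |].
  - apply ex_RInt_continuity_ge0; [easy |]. intros x Hx.
    apply integrand_comp_scal_continuity_pt; lra.
  - apply ex_RInt_continuity_ge0; [easy |]. intros x Hx.
    apply exp_neg_rpow_continuity_pt; lra.
  - intros x Hx. rewrite <- (Rdiv_1_r (exp _)), <- (Rmult_1_l (rpow x _)), Ropp_mult_distr_l.
    apply integrand_comp_scal_le; try nra.
    unfold k. rewrite Rpower_mult. replace (- (alpha / 2) * (2 / alpha)) with (Ropp 1) by (field; lra).
    rewrite Rpower_Ropp, Rpower_1 by easy. field. apply Rgt_not_eq, Hs.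
Qed.

Lemma Iint_is_lub s : 0 < s ->
  is_lub (fun v => exists b, 0 <= b /\ v = RInt (integrand alpha s) 0 b) (Iint alpha s).
Proof.
  intros Hs. apply (RInt_gen_is_lub _ (Rpower s (- (alpha / 2)) * 1024)).
  - intros. now apply integrand_ge0.
  - intros. apply ex_RInt_continuity_ge0; [easy |]. intros. apply integrand_continuity_pt; lra.
  - intros. now apply RInt_integrand_le.
Qed.

Lemma RInt_le_Iint s b : 0 < s -> 0 <= b -> RInt (integrand alpha s) 0 b <= Iint alpha s.
Proof. intros Hs Hb. apply (Iint_is_lub s Hs). now exists b. Qed.

Lemma Iint_le s M : 0 < s ->
  (forall b, 0 <= b -> RInt (integrand alpha s) 0 b <= M) -> Iint alpha s <= M.
Proof. intros Hs HM. apply (Iint_is_lub s Hs). intros v [b [Hb ->]]. auto. Qed.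

Lemma Iint_pos s : 0 < s -> 0 < Iint alpha s.
Proof.
  intros Hs. apply Rlt_le_trans with (RInt (integrand alpha s) 0 1); [| apply RInt_le_Iint; lra].
  apply RInt_gt_0; [lra | |].
  - intros x Hx. apply Rdiv_lt_0_compat; [apply exp_pos | lra].
  - intros x Hx. apply continuity_pt_filterlim, integrand_continuity_pt; lra.
Qed.

Definition phi s := Rpower s (alpha / 2) * Iint alpha s.

Lemma phi_pos s : 0 < s -> 0 < phi s.
Proof. intros. apply Rmult_lt_0_compat; [apply Rpower_pos | now apply Iint_pos]. Qed.

Lemma phi_le_1024 s : 0 < s -> phi s <= 1024.
Proof.
  intros Hs. unfold phi.
  rewrite <- (Rmult_1_l 1024), <- (Rinv_r (Rpower s (alpha / 2))), Rmult_assoc, <- Rpower_Ropp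
    by apply Rgt_not_eq, Rpower_pos.
  apply Rmult_le_compat_l; [left; apply Rpower_pos |].
  apply Iint_le; [easy |]. intros. now apply RInt_integrand_le.
Qed.

Lemma phi_nondecreasing s t : 0 < s -> s <= t -> phi s <= phi t.
Proof.
  intros Hs Hst. set (lam := Rpower (t / s) (alpha / 2)).
  assert (Hts : 0 < t / s) by (apply Rdiv_lt_0_compat; lra).
  assert (Hlam : 1 <= lam).
  { unfold lam. rewrite <- (Rpower_O (t / s)) by easy. apply Rle_Rpower; [| lra].
    apply (Rmult_le_reg_r s); [lra |]. field_simplify; lra. }
  assert (Hslam : s * Rpower lam (2 / alpha) = t).
  { unfold lam. rewrite Rpower_mult. replace (alpha / 2 * (2 / alpha)) with 1 by (field; lra).
    rewrite Rpower_1 by easy. field. lra. }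
  assert (HI : Iint alpha s <= lam * Iint alpha t).
  { apply Iint_le; [easy |]. intros b Hb.
    assert (Hbl : 0 <= b / lam) by (apply Rdiv_le_0_compat; lra).
    rewrite (RInt_integrand_comp_scal alpha s lam b) by lra.
    apply Rmult_le_compat_l; [lra |].
    apply Rle_trans with (RInt (integrand alpha t) 0 (b / lam)); [| apply RInt_le_Iint; lra].
    apply RInt_le; [easy | | |].
    - apply ex_RInt_continuity_ge0; [easy |]. intros x Hx.
      apply integrand_comp_scal_continuity_pt; lra.
    - apply ex_RInt_continuity_ge0; [easy |]. intros. apply integrand_continuity_pt; lra.
    - intros x Hx. apply integrand_comp_scal_le; nra. }
  unfold phi. replace (Rpower t (alpha / 2)) with (Rpower s (alpha / 2) * lam).
  - rewrite Rmult_assoc. apply Rmult_le_compat_l; [left; apply Rpower_pos | easy].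
  - unfold lam. rewrite Rpower_mult_distr by lra. f_equal. field. lra.
Qed.

End Iint.

Definition payoff_factor (beta a L : R) : R := L * Rpower (L + a) (- beta).

Lemma payoff_factor_ge0 beta a L : 0 <= L -> 0 <= payoff_factor beta a L.
Proof. intros. apply Rmult_le_pos; [easy | left; apply Rpower_pos]. Qed.

Lemma payoff_factor_exp beta a L : 0 < a -> 0 < L ->
  payoff_factor beta a L = exp (ln L - beta * ln (L + a)).
Proof.
  intros. unfold payoff_factor, Rpower. rewrite <- (exp_ln L) at 1 by easy.
  rewrite <- exp_plus. f_equal. ring.
Qed.

Lemma payoff_factor_scal beta a v : 0 < a -> 0 <= v ->
  payoff_factor beta a (v * a) = a * Rpower a (- beta) * payoff_factor beta 1 v.
Proof.
  intros. unfold payoff_factor. replace (v * a + a) with (a * (v + 1)) by ring.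
  rewrite <- Rpower_mult_distr by lra. ring.
Qed.

Lemma ln_payoff_factor_MVT beta a L L' : 0 < a -> 0 < L < L' ->
  exists c, L < c < L' /\
    (ln L' - beta * ln (L' + a)) - (ln L - beta * ln (L + a))
    = (a - (beta - 1) * c) / (c * (c + a)) * (L' - L).
Proof.
  intros Ha HL.
  destruct (MVT_cor2 (fun z => ln z - beta * ln (z + a))
              (fun z => / z - beta * / (z + a)) L L') as [c [Hmvt Hc]]; [lra | |].
  - intros z Hz. apply derivable_pt_lim_minus; [apply derivable_pt_lim_ln; lra |].
    replace (beta * / (z + a)) with (beta * (/ (z + a) * (1 + 0))) by ring.
    apply derivable_pt_lim_scal, (derivable_pt_lim_comp (fun z => z + a) ln).
    + apply derivable_pt_lim_plus; [apply derivable_pt_lim_id | apply derivable_pt_lim_const].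
    + apply derivable_pt_lim_ln. lra.
  - exists c. split; [easy |]. rewrite Hmvt. f_equal. field. lra.
Qed.

Section PayoffFactor.

Variables beta a : R.
Hypotheses (beta_gt1 : 1 < beta) (a_pos : 0 < a).

Lemma payoff_factor_lt_increasing L L' : 0 <= L < L' -> L' <= a / (beta - 1) ->
  payoff_factor beta a L < payoff_factor beta a L'.
Proof.
  intros HL HL'. destruct (Req_dec L 0) as [-> | HL0].
  - unfold payoff_factor at 1. rewrite Rmult_0_l.
    apply Rmult_lt_0_compat; [lra | apply Rpower_pos].
  - rewrite !payoff_factor_exp by lra. apply exp_increasing.
    destruct (ln_payoff_factor_MVT beta a L L') as [c [Hc Hdiff]]; [lra | lra |].
    assert (Hca : (beta - 1) * c < a).
    { apply Rlt_le_trans with ((beta - 1) * (a / (beta - 1))); [apply Rmult_lt_compat_l; lra |].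
      right. field. lra. }
    assert (0 < (a - (beta - 1) * c) / (c * (c + a))) by (apply Rdiv_lt_0_compat; nra).
    nra.
Qed.

Lemma payoff_factor_lt_decreasing L L' : a / (beta - 1) <= L -> L < L' ->
  payoff_factor beta a L' < payoff_factor beta a L.
Proof.
  intros HL HL'. assert (0 < a / (beta - 1)) by (apply Rdiv_lt_0_compat; lra).
  rewrite !payoff_factor_exp by lra. apply exp_increasing.
  destruct (ln_payoff_factor_MVT beta a L L') as [c [Hc Hdiff]]; [lra | lra |].
  assert (Hca : a < (beta - 1) * c).
  { apply Rle_lt_trans with ((beta - 1) * (a / (beta - 1))); [right; field; lra |].
    apply Rmult_lt_compat_l; lra. }
  assert ((a - (beta - 1) * c) / (c * (c + a)) < 0).
  { apply Rmult_neg_pos; [lra | apply Rinv_0_lt_compat; nra]. }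
  nra.
Qed.

End PayoffFactor.

Section Payoff.

Variable alpha : R.
Hypothesis alpha_range : 2 < alpha <= 4.

Let threshold_eq a : a / (alpha / 2 - 1) = 2 / (alpha - 2) * a.
Proof. field. lra. Qed.

Lemma payoff_eq a L : 0 < a -> 0 <= L ->
  L * Iint alpha (a + L) = payoff_factor (alpha / 2) a L * phi alpha (a + L).
Proof.
  intros. unfold payoff_factor, phi. rewrite Rpower_Ropp, (Rplus_comm L a).
  field. apply Rgt_not_eq, Rpower_pos.
Qed.

Lemma payoff_lt_increasing a L L' : 0 < a -> 0 <= L < L' -> L' <= 2 / (alpha - 2) * a ->
  L * Iint alpha (a + L) < L' * Iint alpha (a + L').
Proof.
  intros Ha HL HL'. rewrite !payoff_eq by lra.
  apply Rle_lt_trans with (payoff_factor (alpha / 2) a L * phi alpha (a + L')).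
  - apply Rmult_le_compat_l; [apply payoff_factor_ge0; lra |].
    apply phi_nondecreasing; lra.
  - apply Rmult_lt_compat_r; [apply phi_pos; lra |].
    apply payoff_factor_lt_increasing; try rewrite threshold_eq; lra.
Qed.

Lemma best_response_ge a N z : 0 < a -> 0 <= z <= N ->
  (forall L, 0 <= L <= N -> L * Iint alpha (a + L) <= z * Iint alpha (a + z)) ->
  Rmin N (2 / (alpha - 2) * a) <= z.
Proof.
  intros Ha Hz Hbest. apply Rnot_lt_le. intros Hlt.
  pose proof (Rmin_l N (2 / (alpha - 2) * a)). pose proof (Rmin_r N (2 / (alpha - 2) * a)).
  specialize (Hbest (Rmin N (2 / (alpha - 2) * a)) ltac:(lra)).
  pose proof (payoff_lt_increasing a z (Rmin N (2 / (alpha - 2) * a)) Ha ltac:(lra) ltac:(lra)).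
  lra.
Qed.

Lemma phi_is_lub : exists G, 0 < G /\ is_lub (fun v => exists s, 0 < s /\ v = phi alpha s) G.
Proof.
  destruct (completeness (fun v => exists s, 0 < s /\ v = phi alpha s)) as [G HG].
  - exists 1024. intros v [s [Hs ->]]. apply phi_le_1024; lra.
  - exists (phi alpha 1), 1. split; [lra | easy].
  - exists G. split; [| easy].
    apply Rlt_le_trans with (phi alpha 1); [apply phi_pos; lra |].
    apply HG. exists 1. split; [lra | easy].
Qed.

Lemma best_response_lt_eventually v : 2 / (alpha - 2) < v ->
  exists s0, 0 < s0 /\ forall a L, s0 < a -> v * a <= L ->
    L * Iint alpha (a + L) < 2 / (alpha - 2) * a * Iint alpha (a + 2 / (alpha - 2) * a).
Proof.
  intros Hv. set (u := 2 / (alpha - 2)) in *.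
  assert (Hu : 0 < u) by (apply Rdiv_lt_0_compat; lra).
  set (g := payoff_factor (alpha / 2) 1).
  assert (Hgu : 0 < g u) by (apply Rmult_lt_0_compat; [lra | apply Rpower_pos]).
  assert (Hgv : g v < g u).
  { apply payoff_factor_lt_decreasing; [lra | lra | right | lra]. unfold u. field. lra. }
  destruct phi_is_lub as [G [HG HGlub]].
  destruct (is_lub_approx _ G (g v / g u * G) HGlub) as [w [[s0 [Hs0 ->]] Hs0G]].
  { apply (Rmult_lt_reg_l (g u)); [easy |]. field_simplify; nra. }
  exists s0. split; [easy |]. intros a L Ha HL.
  assert (HLa : L = L / a * a) by (field; lra).
  rewrite !payoff_eq, HLa, !payoff_factor_scal by (try apply Rdiv_le_0_compat; nra).
  rewrite <- HLa. fold g.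
  set (K := a * Rpower a (- (alpha / 2))).
  assert (HK : 0 < K) by (apply Rmult_lt_0_compat; [lra | apply Rpower_pos]).
  assert (HgL : g (L / a) <= g v).
  { assert (Hva : v <= L / a) by (apply Rle_div_r; lra).
    destruct Hva as [Hlt | <-]; [left | lra].
    apply payoff_factor_lt_decreasing; [lra | lra | | easy].
    apply Rle_trans with u; [right; unfold u; field | ]; lra. }
  assert (HphiL : phi alpha (a + L) <= G) by (apply HGlub; exists (a + L); split; [nra | easy]).
  assert (Hphiu : phi alpha s0 <= phi alpha (a + u * a)) by (apply phi_nondecreasing; nra).
  assert (0 <= g (L / a)) by (apply payoff_factor_ge0, Rdiv_le_0_compat; nra).
  assert (0 < phi alpha (a + L)) by (apply phi_pos; nra).
  apply Rle_lt_trans with (K * g v * G).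
  - apply Rmult_le_compat; [| | apply Rmult_le_compat_l |]; nra.
  - replace (K * g v * G) with (K * g u * (g v / g u * G)) by (field; lra).
    apply Rmult_lt_compat_l; nra.
Qed.

End Payoff.

Lemma Nash_profile alpha c N1 x y : 2 < alpha < 4 -> 1 <= c -> 0 < N1 ->
  is_Nash alpha N1 (c * N1) x y -> x = N1 /\ Rmin c (2 / (alpha - 2)) * N1 <= y <= c * N1.
Proof.
  intros Ha Hc HN1 [[Hx Hy] [Hbest1 Hbest2]]. unfold U1, U2 in *.
  assert (Hu : 1 < 2 / (alpha - 2)) by (apply Rlt_div_r; lra).
  assert (Hy0 : 0 < y).
  { destruct Hy as [[Hy0 | <-] _]; [easy | exfalso].
    specialize (Hbest2 (c * N1) ltac:(split; nra)). rewrite Rmult_0_l in Hbest2.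
    assert (0 < c * N1 * Iint alpha (x + c * N1)) by (apply Rmult_lt_0_compat, Iint_pos; nra).
    lra. }
  assert (Hx0 : 0 < x).
  { destruct Hx as [[Hx0 | <-] _]; [easy | exfalso].
    specialize (Hbest1 N1 ltac:(lra)). rewrite Rmult_0_l in Hbest1.
    assert (0 < N1 * Iint alpha (N1 + y)) by (apply Rmult_lt_0_compat, Iint_pos; lra).
    lra. }
  assert (Hbr1 : Rmin N1 (2 / (alpha - 2) * y) <= x).
  { apply best_response_ge; [lra | easy | easy |].
    intros L HL. rewrite !(Rplus_comm y). auto. }
  assert (Hbr2 : Rmin (c * N1) (2 / (alpha - 2) * x) <= y)
    by (apply best_response_ge; auto; lra).
  assert (Hx1 : x = N1).
  { revert Hbr1 Hbr2. unfold Rmin.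
    destruct (Rle_dec N1 _), (Rle_dec (c * N1) _); nra. }
  split; [easy | split; [| easy]]. subst x. revert Hbr2. unfold Rmin.
  destruct (Rle_dec c _), (Rle_dec (c * N1) _); nra.
Qed.

Lemma Nash_snd_lt_eventually alpha c eps : 2 < alpha < 4 -> 1 <= c -> 2 / (alpha - 2) < c ->
  0 < eps -> exists s0, forall N1 x y, s0 < N1 -> is_Nash alpha N1 (c * N1) x y ->
    y < (2 / (alpha - 2) + eps) * N1.
Proof.
  intros Ha Hc Hu Heps.
  destruct (best_response_lt_eventually alpha ltac:(lra) (2 / (alpha - 2) + eps))
    as [s0 [Hs0 Hlt]]; [lra |].
  exists s0. intros N1 x y HN1 HNash.
  destruct (Nash_profile alpha c N1 x y Ha Hc ltac:(lra) HNash) as [-> _].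
  destruct HNash as [_ [_ Hbest2]]. unfold U2 in Hbest2.
  apply Rnot_le_lt. intros Hge.
  assert (0 < 2 / (alpha - 2)) by (apply Rdiv_lt_0_compat; lra).
  assert (Hfeasible : 0 <= 2 / (alpha - 2) * N1 <= c * N1) by (split; nra).
  specialize (Hbest2 _ Hfeasible). specialize (Hlt N1 y HN1 Hge). lra.
Qed.

Theorem theorem7 (alpha c : R) (E : R -> R * R) :
  2 < alpha < 4 -> 1 <= c ->
  (forall N1, 0 < N1 -> is_Nash alpha N1 (c * N1) (fst (E N1)) (snd (E N1))) ->
  Rbar_locally p_infty (fun N1 => fst (E N1) = N1) /\
  is_lim (fun N1 => snd (E N1) / N1) p_infty (Rmin c (2 / (alpha - 2))).
Proof.
  intros Ha Hc HE.
  assert (Hprofile : forall N1, 0 < N1 ->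
    fst (E N1) = N1 /\ Rmin c (2 / (alpha - 2)) * N1 <= snd (E N1) <= c * N1)
    by (intros N1 HN1; exact (Nash_profile alpha c N1 _ _ Ha Hc HN1 (HE N1 HN1))).
  split; [exists 0; apply Hprofile |].
  apply is_lim_spec. intros eps. simpl. pose proof (cond_pos eps) as Heps.
  destruct (Rle_lt_dec c (2 / (alpha - 2))) as [Hcu | Hcu].
  - rewrite Rmin_left by easy. exists 0. intros N1 HN1.
    destruct (Hprofile N1 HN1) as [_ Hy]. rewrite Rmin_left in Hy by easy.
    replace (snd (E N1) / N1) with c by (field_simplify_eq; nra).
    now rewrite Rminus_diag, Rabs_R0.
  - rewrite Rmin_right by lra.
    destruct (Nash_snd_lt_eventually alpha c eps Ha Hc Hcu Heps) as [s0 Hupper].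
    exists (Rmax 0 s0). intros N1 HN1. pose proof (Rmax_l 0 s0). pose proof (Rmax_r 0 s0).
    destruct (Hprofile N1 ltac:(lra)) as [_ Hy]. rewrite Rmin_right in Hy by lra.
    specialize (Hupper N1 _ _ ltac:(lra) (HE N1 ltac:(lra))).
    assert (2 / (alpha - 2) <= snd (E N1) / N1) by (apply (Rle_div_r _ _ N1); lra).
    assert (snd (E N1) / N1 < 2 / (alpha - 2) + eps) by (apply (Rlt_div_l _ _ N1); lra).
    apply Rabs_def1; lra.
Qed.
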